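(* Let $0\le t_d\le t_f$ be integers, let $\mathcal{C}$ be an $[n,k,\ge 2t_d+1]$ linear code over $\mathbb{F}_q$ with generator matrix $G$ and $c_u=uG$, let $f:\mathbb{F}_q^k\to\mathrm{Im}(f)$, and let $u_1,\dots,u_M\in\mathbb{F}_q^k$. Then $$N\big(\mathcal{D}_{\mathcal{C},f}(t_f:u_1,\dots,u_M)\big)\le N(M,2(t_f-t_d)).$$
   Context: $d(\cdot,\cdot)$ is Hamming distance. $\mathcal{D}_{\mathcal{C},f}(t_f:u_1,\dots,u_M)$ is the $M\times M$ matrix with $(i,j)$ entry $\max(2t_f+1-d(c_{u_i},c_{u_j}),0)$ if $f(u_i)\ne f(u_j)$ and $0$ otherwise. For a nonnegative integer $M\times M$ matrix $\mathcal{D}$, $N(\mathcal{D})$ is the least $r$ such that there are $p_1,\dots,p_M\in\mathbb{F}_q^r$ (not necessarily distinct) with $d(p_i,p_j)\ge[\mathcal{D}]_{i,j}$ for all $i,j$. $N(M,D)$ denotes $N(\mathcal{D})$ for the matrix with all off-diagonal entries equal to $D$ and zero diagonal. *)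

From HB Require Import structures.
From mathcomp Require Import all_boot all_order all_algebra.
From Stdlib Require Import ClassicalEpsilon.
Set Implicit Arguments. Unset Strict Implicit. Unset Printing Implicit Defensive.
Import GRing.Theory.

Definition hdist (F : finFieldType) (n : nat) (x y : 'rV[F]_n) : nat :=
  #|[set i : 'I_n | x ord0 i != y ord0 i]|.

Definition feasible (F : finFieldType) (M : nat) (D : 'M[nat]_M) (r : nat) : bool :=
  [exists p : {ffun 'I_M -> 'rV[F]_r},
     [forall i : 'I_M, [forall j : 'I_M, D i j <= hdist (p i) (p j)]]].

(* N(D) : least feasible r (0 by convention if none exists, which never
   happens over a field) *)
Definition Nmin (F : finFieldType) (M : nat) (D : 'M[nat]_M) : nat :=
  match excluded_middle_informative (exists r, feasible F D r) with
  | left h => ex_minn h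
  | right _ => 0
  end.

Definition constD (M D : nat) : 'M[nat]_M :=
  \matrix_(i, j) (if i == j then 0 else D).

(* D_{C,f}(t_f : u_1..u_M), c_u = u G; nat subtraction is max(.,0) *)
Definition DCf (F : finFieldType) (k n : nat) (Y : eqType) (G : 'M[F]_(k, n))
  (f : 'rV[F]_k -> Y) (tf M : nat) (u : 'I_M -> 'rV[F]_k) : 'M[nat]_M :=
  \matrix_(i, j) (if f (u i) != f (u j)
                  then (2 * tf + 1 - hdist (u i *m G) (u j *m G))%N
                  else 0%N).

(* Whenever f(u_i) <> f(u_j) the messages differ, so the minimum distance of
   the code gives d(c_{u_i}, c_{u_j}) >= 2 t_d + 1 and the (i,j) entry of
   D_{C,f} is at most 2 t_f + 1 - (2 t_d + 1) = 2 (t_f - t_d).  Hence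
   D_{C,f} is dominated entrywise by the matrix of N(M, 2(t_f - t_d)), and
   N(.) is monotone for entrywise domination. *)
From mathcomp Require Import all_boot all_order all_algebra.
Import GRing.Theory.
From Stdlib Require Import ClassicalEpsilon.

Section MinimalLength.

Variables (F : finFieldType) (M : nat).

Lemma Nmin_le (D : 'M[nat]_M) r : feasible F D r -> (Nmin F D <= r)%N.
Proof.
move=> feasDr; rewrite /Nmin; case: excluded_middle_informative => [h|[]].
  by case: ex_minnP => m _; apply.
by exists r.
Qed.

Lemma feasible_Nmin (D : 'M[nat]_M) :
  (exists r, feasible F D r) -> feasible F D (Nmin F D).
Proof.
rewrite /Nmin; case: excluded_middle_informative => [h _|//].
by case: ex_minnP.
Qed.

Lemma feasible_le (D D' : 'M[nat]_M) r :
  (forall i j, D i j <= D' i j)%N -> feasible F D' r -> feasible F D r.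
Proof.
move=> leDD' /existsP[p /forallP feas_p]; apply/existsP; exists p.
apply/forallP => i; apply/forallP => j.
exact: leq_trans (leDD' i j) (forallP (feas_p i) j).
Qed.

Lemma Nmin_le_mono (D D' : 'M[nat]_M) :
  (forall i j, D i j <= D' i j)%N -> (exists r, feasible F D' r) ->
  (Nmin F D <= Nmin F D')%N.
Proof.
move=> leDD' /feasible_Nmin feasD'.
by apply: Nmin_le; apply: feasible_le feasD'.
Qed.

(* p_i is the indicator of the i-th block of D consecutive coordinates. *)
Lemma feasible_constD D : feasible F (constD M D) (D * M).
Proof.
apply/existsP.
exists [ffun i : 'I_M => (\row_(l < D * M) (if (l %/ D)%N == i then 1 else 0 : F))%R].
apply/forallP => i; apply/forallP => j; rewrite mxE.
have [//|neq_ij] := eqVneq i j.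
have block_lt (x : 'I_D) : (i * D + x < D * M)%N.
  rewrite mulnC; apply: leq_trans (_ : D * i.+1 <= D * M)%N.
    by rewrite mulnS addnC ltn_add2r.
  by rewrite leq_mul2l ltn_ord orbT.
pose g (x : 'I_D) : 'I_(D * M) := Ordinal (block_lt x).
have g_inj : injective g by move=> x y /(congr1 val) /= /addnI /val_inj.
rewrite /hdist -{1}(card_ord D) -(card_imset (mem 'I_D) g_inj).
apply/subset_leq_card/subsetP => _ /imsetP[x _ ->].
have g_block : (i * D + x) %/ D = i.
  by rewrite divnMDl ?divn_small ?addn0 // (leq_ltn_trans _ (ltn_ord x)).
rewrite inE !ffunE !mxE /= g_block eqxx.
by rewrite (_ : (i : nat) == j = false) ?oner_eq0 //; apply/negbTE.
Qed.

End MinimalLength.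

Lemma hdist_subr (F : finFieldType) n (x y : 'rV[F]_n) :
  hdist x y = hdist (x - y)%R 0%R.
Proof. by apply: eq_card => i; rewrite !inE !mxE subr_eq0. Qed.

Lemma DCf_le_constD (F : finFieldType) (n k M td tf : nat)
  (G : 'M[F]_(k, n)) (Y : eqType) (f : 'rV[F]_k -> Y) (u : 'I_M -> 'rV[F]_k) :
  (forall v : 'rV[F]_k, v != 0%R -> (2 * td + 1 <= hdist (v *m G) 0%R)%N) ->
  forall i j, (DCf G f tf u i j <= constD M (2 * (tf - td)) i j)%N.
Proof.
move=> min_dist i j; rewrite !mxE.
have [eq_fu|neq_fu] := eqVneq (f (u i)) (f (u j)); first by [].
have neq_ij : i != j by apply: contra_neq neq_fu => ->.
have neq_u : (u i - u j != 0)%R by rewrite subr_eq0; apply: contra_neq neq_fu => ->.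
have := min_dist _ neq_u; rewrite mulmxBl -hdist_subr => dist_ge.
rewrite (negbTE neq_ij); apply: leq_trans (leq_sub2l _ dist_ge) _.
by rewrite subnDr mulnBr.
Qed.

Theorem mainTheorem5 (F : finFieldType) (n k M td tf : nat)
  (G : 'M[F]_(k, n)) (Y : eqType) (f : 'rV[F]_k -> Y) (u : 'I_M -> 'rV[F]_k) :
  (td <= tf)%N ->
  row_free G ->
  (forall v : 'rV[F]_k, v != 0%R -> (2 * td + 1 <= hdist (v *m G) 0%R)%N) ->
  (Nmin F (DCf G f tf u) <= Nmin F (constD M (2 * (tf - td))))%N.
Proof.
move=> _ _ min_dist; apply: Nmin_le_mono; first exact: DCf_le_constD.
by exists (2 * (tf - td) * M)%N; apply: feasible_constD.
Qed.
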